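(* For $k\ge1$ let $Z_k$ be the event that a random sequence $g_1,\ldots,g_t$ of elements of $\mathbb{Z}_{35^k}$ is good, and let $\mathcal{Z}=(Z_1,Z_2,\ldots)$. Then every threshold function $\tau$ for $\mathcal{Z}$ satisfies, as $k\to\infty$, \[\tau(k)\le k^2\exp\left[\left(3\lg 5\,\lg 7\,\lg k\right)^{1/3}-\left(\frac{2}{3}\right)\lg\lg k+O(1)\right].\]
   Context: For a finite additive group $\Gamma$, a sequence $(g_1,\ldots,g_t)$ of elements of $\Gamma$ is a zero-sum sequence if $g_1+\cdots+g_t=0_\Gamma$; its cross number is $\sum_i 1/|g_i|$ with $|g_i|$ the order of $g_i$; the sequence is good if it contains a zero-sum subsequence with cross number at most $1$. A random sequence of length $t$ is chosen uniformly among all length-$t$ sequences of elements of the group. A function $\tau(k)$ is a threshold for the sequence of events $(Z_k)$ if the probability of $Z_k$ with $t=f(k)$ tends to $1$ whenever $f(k)/\tau(k)\to\infty$ and tends to $0$ whenever $f(k)/\tau(k)\to0$. $\lg$ is the base-2 logarithm and $\exp$ the natural exponential. *)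

From HB Require Import structures.
From mathcomp Require Import all_boot all_order all_algebra all_fingroup.
From mathcomp Require Import all_classical all_reals all_analysis.
Set Implicit Arguments. Unset Strict Implicit. Unset Printing Implicit Defensive.
Import Order.TTheory GRing.Theory Num.Theory.
Import numFieldNormedType.Exports.
Local Open Scope ring_scope.

Definition zseq (n t : nat) := {ffun 'I_t -> 'Z_n}.

Definition cross_number (n t : nat) (s : zseq n t) (I : {set 'I_t}) : rat :=
  \sum_(i in I) (#[s i]%g)%:R^-1.

Definition good (n t : nat) (s : zseq n t) : bool :=
  [exists I : {set 'I_t},
     [&& I != finset.set0, (\sum_(i in I) s i == 0) & cross_number s I <= 1]].

Definition prob_good (R : realType) (n t : nat) : R :=
  (#|[set s : zseq n t | good s]|)%:R / (#|[set: zseq n t]|)%:R.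

Definition PZ (R : realType) (k t : nat) : R := prob_good R (35 ^ k) t.

Local Open Scope classical_set_scope.

Definition is_threshold (R : realType) (P : nat -> nat -> R) (tau : nat -> R) : Prop :=
  (forall k, 0 < tau k) /\
  forall f : nat -> nat,
    ((f k)%:R / tau k @[k --> \oo] --> +oo ->
       P k (f k) @[k --> \oo] --> (1:R)) /\
    ((f k)%:R / tau k @[k --> \oo] --> (0:R) ->
       P k (f k) @[k --> \oo] --> (0:R)).

Definition lg (R : realType) (x : R) : R := ln x / ln 2.

From HB Require Import structures.
From mathcomp Require Import all_boot all_order all_algebra all_fingroup.
From mathcomp Require Import all_classical all_reals all_analysis.
From mathcomp Require Import ring lra zify.
Import Order.TTheory GRing.Theory Num.Theory.
Import numFieldNormedType.Exports.
Set Implicit Arguments. Unset Strict Implicit. Unset Printing Implicit Defensive.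
Local Open Scope ring_scope.

(* A sequence of length t in Z_n with a nonempty zero-sum subsequence and
   all of whose terms have order at least t is good, since every
   subsequence then has cross number at most 1.  The subset sums over two
   distinct nonempty index sets are independent and uniform, so the number
   of nonempty zero-sum subsequences has mean (2^t - 1)/n and variance at
   most its mean: by Chebyshev no such subsequence exists with probability
   at most n/(2^t - 1).  At most t^2 elements of Z_n have order below t,
   so some term has small order with probability at most t^3/n.  For
   n = 35^k and t = 6k a random sequence is thus good with probability at
   least 1/2, hence every threshold is eventually below 6k g(k) for any g
   tending to infinity; g(k) = k exp(...) gives the bound with C = ln 6. *)

Section AdditiveFibers.
Variables (U V : finZmodType) (f : U -> V).
Hypotheses (fD : {morph f : x y / x + y}) (f_surj : forall y, exists x, f x = y).
Local Notation ker := [set x | f x == 0].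

Lemma card_fiber_additive y : #|[set x | f x == y]| = #|ker|.
Proof.
have [x0 <-] := f_surj y.
rewrite -(card_preimset _ (addIr x0)); apply: eq_card => x.
by rewrite !inE fD -subr_eq0 addrK.
Qed.

Lemma card_preimset_additive (S : {set V}) :
  #|f @^-1: S| = (#|S| * #|ker|)%N.
Proof.
rewrite -sum1_card (partition_big f (mem S)) => [|x]; last by rewrite inE.
rewrite -sum_nat_const; apply: eq_bigr => y yS.
rewrite -(card_fiber_additive y) -sum1_card; apply: eq_bigl => x.
by rewrite !inE andb_idl // => /eqP ->.
Qed.

Lemma card_additive_surj : #|U| = (#|V| * #|ker|)%N.
Proof. by have := card_preimset_additive [set: V]; rewrite preimsetT !cardsT. Qed.

End AdditiveFibers.

HB.instance Definition _ (G : finZmodType) := GRing.Zmodule.on (G * G)%type.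
HB.instance Definition _ (I : finType) (G : finZmodType) :=
  GRing.Zmodule.on {ffun I -> G}.

Lemma sum_mem_card (T : finType) (S : {set T}) : (\sum_(x : T) (x \in S) = #|S|)%N.
Proof. by rewrite -sum1_card [RHS]big_mkcond; apply: eq_bigr => x _; case: (x \in S). Qed.

Lemma card_mul_sqr_le_sum_sqr (R : realDomainType) (T : finType) (N : {set T})
    (Y : T -> R) (m : R) :
  {in N, forall x, Y x = 0} -> #|N|%:R * m ^+ 2 <= \sum_x (Y x - m) ^+ 2.
Proof.
move=> Y0; rewrite (bigID (mem N)) /= -[X in X <= _]addr0.
apply: lerD; last by apply: sumr_ge0 => x _; apply: sqr_ge0.
rewrite (eq_bigr (fun=> m ^+ 2)) => [|x xN]; last by rewrite Y0 // sub0r sqrrN.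
by rewrite sumr_const mulr_natl.
Qed.

Section ZeroSums.
Variables (G : finZmodType) (t : nat).
Local Notation D := {ffun 'I_t -> G}.
Local Notation K := #|G|.

Lemma card_seq : #|D| = (K ^ t)%N.
Proof. by rewrite card_ffun card_ord. Qed.

Definition subset_sum (A : {set 'I_t}) (s : D) : G := \sum_(i in A) s i.

Lemma subset_sumD A : {morph subset_sum A : s s' / s + s'}.
Proof.
by move=> s s'; rewrite /subset_sum -big_split; apply: eq_bigr => i _; rewrite ffunE.
Qed.

Definition delta (i : 'I_t) (c : G) : D := [ffun j => c *+ (j == i)].

Lemma subset_sum_delta A i c : subset_sum A (delta i c) = c *+ (i \in A).
Proof.
rewrite /subset_sum; have [iA | iA] := boolP (i \in A).
  rewrite (bigD1 i) //= ffunE eqxx big1 ?addr0 // => j /andP[_ /negbTE ji].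
  by rewrite ffunE ji.
by rewrite big1 // => j jA; rewrite ffunE; case: eqP jA iA => // -> ->.
Qed.

Definition zero_sum_set A := [set s : D | subset_sum A s == 0].

Lemma card_zero_sum_set A : A != finset.set0 -> (K * #|zero_sum_set A|)%N = (K ^ t)%N.
Proof.
case/set0Pn=> i iA; rewrite -card_seq [RHS](card_additive_surj (subset_sumD A)) //.
by move=> c; exists (delta i c); rewrite subset_sum_delta iA.
Qed.

Lemma card_zero_sum_setI A B : A != finset.set0 -> B != finset.set0 -> A != B ->
  (K ^ 2 * #|zero_sum_set A :&: zero_sum_set B|)%N = (K ^ t)%N.
Proof.
wlog [i iA iB] : A B / exists2 i, i \in A & i \notin B.
  move=> hwlog A0 B0 AB; have := AB; rewrite finset.eqEsubset negb_and.
  case/orP=> /subsetPn sAB; first exact: hwlog.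
  by rewrite finset.setIC hwlog // eq_sym.
move=> _ /set0Pn[j jB] _; pose f s := (subset_sum A s, subset_sum B s).
have fD : {morph f : s s' / s + s'} by move=> s s'; rewrite /f !subset_sumD.
rewrite -card_seq (card_additive_surj fD) => [|[c d]]; last first.
  exists (delta i (c - d *+ (j \in A)) + delta j d).
  by rewrite /f !subset_sumD !subset_sum_delta iA jB (negbTE iB) subrK add0r.
rewrite card_prod -mulnn; congr (_ * _)%N; apply: eq_card => s.
by rewrite !inE xpair_eqE.
Qed.

Lemma card_coord_in i (S : {set G}) :
  (K * #|[set s : D | s i \in S]|)%N = (#|S| * K ^ t)%N.
Proof.
pose f (s : D) := s i.
have fD : {morph f : s s' / s + s'} by move=> s s'; rewrite /f ffunE.
have f_surj c : exists s, f s = c by exists (delta i c); rewrite /f ffunE eqxx.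
have -> : [set s : D | s i \in S] = f @^-1: S by apply/setP => s; rewrite !inE.
by rewrite (card_preimset_additive fD) // -card_seq (card_additive_surj fD) // mulnCA.
Qed.

Lemma card_some_coord_in (S : {set G}) :
  (K * #|[set s : D | [exists i, s i \in S]]| <= t * #|S| * K ^ t)%N.
Proof.
have -> : [set s : D | [exists i, s i \in S]] = \bigcup_i [set s : D | s i \in S].
  by apply/setP => s; rewrite inE; apply/existsP/bigcupP => [[i si] | [i _]];
    [exists i; rewrite ?inE | rewrite inE; exists i].
have -> : (t * #|S| * K ^ t = \sum_(i < t) #|S| * K ^ t)%N.
  by rewrite sum_nat_const card_ord mulnA.
rewrite (eq_bigr (fun i => K * #|[set s : D | s i \in S]|)%N) => [|i _].
  by rewrite -big_distrr leq_mul2l unstable.card_big_setU orbT.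
by rewrite card_coord_in.
Qed.

Local Notation nonempty := [pred A : {set 'I_t} | A != finset.set0].
Local Notation T := (2 ^ t).-1.

Lemma card_nonempty : #|nonempty| = T.
Proof.
have := card_powerset [set: 'I_t].
rewrite cardsT card_ord (cardD1 finset.set0) inE finset.sub0set add1n => <- /=.
by apply: eq_card => A; rewrite !inE finset.subsetT andbT.
Qed.

Definition zero_sums (s : D) : nat := (\sum_(A in nonempty) (s \in zero_sum_set A))%N.

Lemma sum_zero_sums : (K * \sum_s zero_sums s)%N = (T * K ^ t)%N.
Proof.
rewrite exchange_big big_distrr /= (eq_bigr (fun=> K ^ t)%N) => [|A A0].
  by rewrite sum_nat_const card_nonempty.
by rewrite sum_mem_card card_zero_sum_set.
Qed.

Lemma sum_zero_sums_sqr :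
  (K ^ 2 * \sum_s zero_sums s ^ 2)%N = (T * (K ^ t.+1 + T.-1 * K ^ t))%N.
Proof.
have sqr_zero_sums s : (zero_sums s ^ 2 =
    \sum_(A in nonempty) \sum_(B in nonempty) (s \in zero_sum_set A :&: zero_sum_set B))%N.
  rewrite /zero_sums -mulnn big_distrlr; apply: eq_bigr => A _.
  by apply: eq_bigr => B _; rewrite finset.in_setI -mulnb.
under eq_bigr do rewrite sqr_zero_sums.
rewrite exchange_big big_distrr /= (eq_bigr (fun=> K ^ t.+1 + T.-1 * K ^ t)%N) => [|A A0].
  by rewrite sum_nat_const card_nonempty.
rewrite exchange_big big_distrr (bigD1 A) //= finset.setIid sum_mem_card.
rewrite {1}expnS expn1 -mulnA card_zero_sum_set // -expnS.
rewrite (eq_bigr (fun=> K ^ t)%N) => [|B /andP[B0 BA]].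
  rewrite sum_nat_const -card_nonempty [in RHS](cardD1 A) A0 add1n /=.
  by congr (_ + _ * _)%N; apply: eq_card => B; rewrite !inE andbC.
by rewrite sum_mem_card card_zero_sum_setI // eq_sym.
Qed.

Definition zero_sum_free (s : D) := [forall A in nonempty, subset_sum A s != 0].

(* Second moment method for Y := K * zero_sums, whose mean is T. *)
Lemma card_zero_sum_free : (#|[set s | zero_sum_free s]| * T <= K ^ t.+1)%N.
Proof.
have [->|T_gt0] := posnP T; first by rewrite muln0.
pose Y s : rat := (K * zero_sums s)%:R; pose m : rat := T%:R.
have Y0 : {in [set s | zero_sum_free s], forall s, Y s = 0}.
  move=> s; rewrite inE => /forallP zsf; rewrite /Y /zero_sums big1 ?muln0 // => A A0.
  by have := zsf A; rewrite A0 /= inE => /negbTE ->.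
have SY : \sum_s Y s = (T * K ^ t)%:R by rewrite -sum_zero_sums big_distrr natr_sum.
have SY2 : \sum_s Y s ^+ 2 = (T * (K ^ t.+1 + T.-1 * K ^ t))%:R.
  rewrite -sum_zero_sums_sqr big_distrr natr_sum; apply: eq_bigr => s _.
  by rewrite /Y -natrX expnMn.
have SD : \sum_s (Y s - m) ^+ 2 = (T * K ^ t.+1)%:R - (T * K ^ t)%:R.
  rewrite (eq_bigr (fun s => Y s ^+ 2 - 2 * m * Y s + m ^+ 2)) => [|s _]; last by ring.
  rewrite big_split sumrB /= -mulr_sumr sumr_const card_seq SY SY2 /m.
  by rewrite -[T](prednK T_gt0) /=; ring.
have := card_mul_sqr_le_sum_sqr m Y0; rewrite SD /m => cheb.
rewrite -(leq_pmul2l T_gt0) -(ler_nat rat) !natrM.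
have := ler0n rat (T * K ^ t); rewrite !natrM in cheb *; nra.
Qed.
End ZeroSums.

Lemma card_small_order (p t : nat) :
  (#|[set x : 'I_p.+1 | (#[x]%g < t)%N]| <= t * t)%N.
Proof.
(* p.+1 divides x * #[x], so x is determined by #[x] and x * #[x] %/ p.+1,
   both below t. *)
case: t => [|t]; first by rewrite leqn0 cards_eq0; apply/eqP/setP => x; rewrite !inE.
have order_dvd (x : 'I_p.+1) : (p.+1 %| x * #[x]%g)%N.
  by have /(congr1 val) := expg_order x; rewrite Zp_expg /dvdn => /= ->.
have quot_lt (x : 'I_p.+1) : (x * #[x]%g %/ p.+1 < #[x]%g)%N.
  by rewrite ltn_divLR // mulnC ltn_pmul2l ?order_gt0.
pose f (x : 'I_p.+1) : 'I_t.+1 * 'I_t.+1 := (inord #[x]%g, inord (x * #[x]%g %/ p.+1)).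
rewrite -(card_in_imset (f := f)) => [|x y].
  by rewrite (leq_trans (max_card _)) // card_prod card_ord.
rewrite !inE => xt yt /pair_equal_spec[].
move=> /(congr1 (@nat_of_ord _)) + /(congr1 (@nat_of_ord _)).
rewrite (inordK xt) (inordK yt) => oxy.
rewrite (inordK (ltn_trans (quot_lt x) xt)) (inordK (ltn_trans (quot_lt y) yt)) => qxy.
apply: ord_inj; apply/eqP; rewrite -(eqn_pmul2r (order_gt0 x)).
by rewrite -(divnK (order_dvd x)) qxy (divnK (order_dvd y)) oxy.
Qed.

Lemma good_of_orders_ge (n t : nat) (s : zseq n t) :
  ~~ zero_sum_free s -> (forall i, t <= #[s i]%g)%N -> good s.
Proof.
move=> /forallPn[A]; rewrite negb_imply negbK inE => /andP[A0 zA] large.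
have /set0Pn[i0 _] := A0; have t_gt0 : (0 < t)%N := leq_ltn_trans (leq0n _) (ltn_ord i0).
apply/existsP; exists A; rewrite A0 zA /= /cross_number.
apply: (@le_trans _ _ (\sum_(i in A) t%:R^-1)).
  by apply: ler_sum => i _; rewrite lef_pV2 ?ler_nat ?posrE ?ltr0n ?order_gt0.
rewrite sumr_const -[_ *+ #|A|]mulr_natl ler_pdivrMr ?ltr0n // mul1r ler_nat.
by rewrite -[t in (_ <= t)%N]card_ord max_card.
Qed.

Lemma prob_good_ge (R : realType) (n t : nat) : (1 < n)%N -> (0 < t)%N ->
  1 - n%:R / (2 ^ t).-1%:R - (t ^ 3)%:R / n%:R <= prob_good R n t.
Proof.
move=> n_gt1 t_gt0; have card_Zn : #|'Z_n| = n by rewrite card_ord Zp_cast.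
pose small := [set x : 'Z_n | (#[x]%g < t)%N].
pose zsf := [set s : zseq n t | zero_sum_free s].
pose bad := [set s : zseq n t | [exists i, s i \in small]].
have card_D : #|[set: zseq n t]| = (n ^ t)%N by rewrite cardsT card_seq card_Zn.
have cover : (n ^ t <= #|[set s : zseq n t | good s]| + (#|zsf| + #|bad|))%N.
  rewrite -card_D; apply: leq_trans (leq_add (leqnn _) (leq_card_setU _ _)).
  apply: leq_trans (leq_card_setU _ _); apply: subset_leq_card.
  apply/fintype.subsetP => s _; rewrite !inE.
  have [_ | nzsf] := boolP (zero_sum_free s); first by rewrite orbT.
  have [_ | /existsPn large] := boolP [exists i, s i \in small]; first by rewrite !orbT.
  by rewrite good_of_orders_ge // => i; have := large i; rewrite inE -leqNgt.
have zsf_le : (#|zsf| * (2 ^ t).-1 <= n * n ^ t)%N.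
  by have := card_zero_sum_free 'Z_n t; rewrite card_Zn expnS.
have bad_le : (n * #|bad| <= t ^ 3 * n ^ t)%N.
  have := card_some_coord_in t small; rewrite card_Zn => /leq_trans; apply.
  by rewrite leq_mul2r expnS leq_mul2l -mulnn card_small_order !orbT.
have n_gt0 : (0 : R) < n%:R by rewrite ltr0n ltnW.
have T_gt0 : (0 : R) < (2 ^ t).-1%:R.
  by rewrite ltr0n -ltnS prednK ?expn_gt0 // -[1%N]/(2 ^ 0)%N ltn_exp2l.
have D_gt0 : (0 : R) < (n ^ t)%:R by rewrite ltr0n expn_gt0 ltnW.
have zsf_leR : #|zsf|%:R <= n%:R / (2 ^ t).-1%:R * (n ^ t)%:R :> R.
  by rewrite mulrAC ler_pdivlMr // -!natrM ler_nat.
have bad_leR : #|bad|%:R <= (t ^ 3)%:R / n%:R * (n ^ t)%:R :> R.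
  by rewrite mulrAC ler_pdivlMr // -!natrM ler_nat mulnC.
rewrite -(ler_nat R) !natrD in cover.
rewrite /prob_good card_D ler_pdivlMr //; lra.
Qed.

Local Open Scope classical_set_scope.

Section Growth.
Variable R : realType.

Lemma ln2_ge_half : 2^-1 <= ln (2 : R).
Proof.
have e_half : expR (2^-1 : R) <= 2.
  rewrite -[X in _ <= X]invrK -(invrK (expR _)) -expRN lef_pV2 ?posrE ?expR_gt0 //.
  by apply: le_trans (expR_ge1Dx _); lra.
by rewrite -ler_expR lnK ?posrE.
Qed.

Lemma lg_le_ln (x : R) : 1 <= x -> lg x <= 2 * ln x.
Proof.
move=> x1; rewrite /lg mulrC; apply: ler_wpM2r; first exact: ln_ge0.
by rewrite -[X in _ <= X]invrK lef_pV2 ?posrE ?ln2_ge_half ?ln_gt0 ?ltr1n.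
Qed.

Lemma ln_sqr_le_sqrt (x : R) : 1 <= x -> ln x ^+ 2 <= 16 * Num.sqrt x.
Proof.
move=> x1; set y := Num.sqrt (Num.sqrt x).
have y_gt0 : 0 < y by rewrite !sqrtr_gt0; lra.
have x_eq : x = y ^+ 4.
  by rewrite -[4%N]/(2 * 2)%N exprM !sqr_sqrtr ?sqrtr_ge0 //; lra.
have lnx : ln x = 4 * ln y by rewrite x_eq lnXn // mulr_natl.
have := ln_sublinear y_gt0; have := ln_ge0 x1.
by rewrite -[Num.sqrt x](sqr_sqrtr (sqrtr_ge0 _)) -/y lnx; nra.
Qed.

Definition bound_exponent (k : nat) : R :=
  (3 * lg 5 * lg 7 * lg k%:R) `^ 3^-1 - 2 / 3 * lg (lg k%:R).

Lemma expR_bound_exponent_ge (k : nat) :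
  (2 <= k)%N -> 1 <= expR (bound_exponent k) * lg k%:R ^+ 2.
Proof.
move=> k2; set L := lg k%:R.
have L1 : 1 <= L.
  rewrite /L /lg ler_pdivlMr ?ln_gt0 ?ltr1n // mul1r.
  by rewrite ler_ln ?posrE ?ler_nat ?ltr0n // ltnW.
have lnL0 := ln_ge0 L1.
have L_gt0 : 0 < L by apply: lt_le_trans L1.
have exp_lnL : expR (- (2%:R * ln L)) * L ^+ 2 = 1.
  by rewrite expRN expRM_natl lnK ?posrE // mulVf // expf_neq0 // gt_eqF.
rewrite -exp_lnL ler_wpM2r ?exprn_ge0 ?ler_expR //; first by lra.
have := lg_le_ln L1; have := powR_ge0 (3 * lg 5 * lg 7 * L) 3^-1.
rewrite /bound_exponent -/L; lra.
Qed.

Lemma bound_exponent_cvgy : k%:R * expR (bound_exponent k) @[k --> \oo] --> +oo.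
Proof.
apply/cvgryPge => A; near=> k.
have k2 : (2 <= k)%N by near: k; exact: nbhs_infty_ge.
have kA : (64 * (`|A| + 1)) ^+ 2 <= k%:R by near: k; exact: nbhs_infty_ger.
have k1 : 1 <= k%:R :> R by rewrite ler1n ltnW.
set e := expR (bound_exponent k); pose s : R := Num.sqrt k%:R; pose L : R := lg k%:R.
have e_gt0 : 0 < e := expR_gt0 _.
have s_ge0 : 0 <= s := sqrtr_ge0 _.
have s_sqr : s ^+ 2 = k%:R by rewrite sqr_sqrtr ?ler0n.
have eL : 1 <= e * L ^+ 2 := expR_bound_exponent_ge k2.
have L_le : L ^+ 2 <= 64 * s.
  have L_ge0 : 0 <= L by apply: divr_ge0; apply: ln_ge0 => //; rewrite ler1n.
  have := lg_le_ln k1; have := ln_sqr_le_sqrt k1; have := ln_ge0 k1; rewrite -/s -/L.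
  nra.
have se : 1 <= 64 * s * e by nra.
have sA : 64 * (`|A| + 1) <= s by nra.
have := ler_norm A; nra.
Unshelve. all: by end_near.
Qed.

End Growth.

Lemma threshold_lt (R : realType) (P : nat -> nat -> R) (tau : nat -> R)
    (f : nat -> nat) (g : nat -> R) (c : R) :
  is_threshold P tau -> 0 < c -> (\forall k \near \oo, c <= P k (f k)) ->
  g k @[k --> \oo] --> +oo -> \forall k \near \oo, tau k < (f k)%:R * g k.
Proof.
move=> [tau_gt0 thr] c_gt0 Pf_ge g_oo.
(* Along F, F k / tau k <= 1 / g k -> 0, yet P k (F k) = P k (f k) >= c
   whenever tau k >= f k * g k. *)
pose F k := if (f k)%:R * g k <= tau k then f k else 0%N.
have g_gt0 : \forall k \near \oo, 0 < g k by move/cvgryPgt: g_oo; apply.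
have F_0 : (F k)%:R / tau k @[k --> \oo] --> 0.
  apply: (squeeze_cvgr (f := fun=> 0) (h := fun k => (g k)^-1)); last 2 first.
  - exact: cvg_cst.
  - exact/(gtr0_cvgV0 g_gt0).
  near=> k; have gk : 0 < g k by near: k.
  rewrite /F; case: ifP => le_fg; last by rewrite mul0r lexx invr_ge0 ltW.
  by rewrite divr_ge0 ?ler0n ?(ltW (tau_gt0 k)) //= ler_pdivrMr // mulrC ler_pdivlMr.
have PF_lt : \forall k \near \oo, P k (F k) < c.
  exact: cvgr_lt ((thr F).2 F_0) _ c_gt0.
near=> k; rewrite ltNge; apply/negP => le_fg.
have : P k (F k) < c by near: k.
have : c <= P k (f k) by near: k.
by rewrite /F le_fg => /le_lt_trans/[apply]; rewrite ltxx.
Unshelve. all: by end_near.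
Qed.

Lemma four_exp35_lt_exp64 k : (3 <= k)%N -> (4 * 35 ^ k < 64 ^ k)%N.
Proof.
elim: k => // k IHk; rewrite leq_eqVlt => /orP[/eqP <- // | k3].
by have := IHk k3; rewrite !expnS; lia.
Qed.

Lemma four_cube_le_exp35 k : (3 <= k)%N -> (4 * (6 * k) ^ 3 <= 35 ^ k)%N.
Proof.
elim: k => // k IHk; rewrite leq_eqVlt => /orP[/eqP <- // | k3].
by have := IHk k3; rewrite !expnS expn0; nia.
Qed.

Lemma PZ_ge_half (R : realType) k : (3 <= k)%N -> 2^-1 <= PZ R k (6 * k).
Proof.
move=> k3; have k_gt0 : (0 < k)%N by apply: leq_trans k3.
have n_gt1 : (1 < 35 ^ k)%N by rewrite -{1}(expn0 35) ltn_exp2l.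
apply: le_trans (prob_good_ge R n_gt1 _); last by rewrite muln_gt0.
have T_ge : (4 * 35 ^ k <= (2 ^ (6 * k)).-1)%N.
  by rewrite -ltnS prednK ?expn_gt0 // expnM four_exp35_lt_exp64.
have n_gt0 : (0 : R) < (35 ^ k)%:R by rewrite ltr0n expn_gt0.
have T_gt0 : (0 : R) < (2 ^ (6 * k)).-1%:R.
  by rewrite ltr0n (leq_trans _ T_ge) ?muln_gt0 ?expn_gt0.
have a_le : (35 ^ k)%:R / (2 ^ (6 * k)).-1%:R <= 4^-1 :> R.
  by move: T_ge; rewrite -(ler_nat R) natrM ler_pdivrMr //; lra.
have b_le : ((6 * k) ^ 3)%:R / (35 ^ k)%:R <= 4^-1 :> R.
  by move: (four_cube_le_exp35 k3); rewrite -(ler_nat R) natrM ler_pdivrMr //; lra.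
lra.
Qed.

Theorem corollary3p7 (R : realType) (tau : nat -> R) :
  is_threshold (@PZ R) tau ->
  exists C : R, \forall k \near \oo,
    tau k <= (k%:R) ^+ 2 *
      expR ((3 * lg 5 * lg 7 * lg (k%:R)) `^ (3^-1)
            - (2 / 3) * lg (lg (k%:R)) + C).
Proof.
move=> thr; exists (ln 6).
have half_gt0 : (0 : R) < 2^-1 by rewrite invr_gt0.
have half_le : \forall k \near \oo, 2^-1 <= PZ R k (6 * k).
  by near=> k; apply: PZ_ge_half; near: k; exact: nbhs_infty_ge.
near=> k; have tau_lt : tau k < (6 * k)%:R * (k%:R * expR (bound_exponent R k)).
  by near: k; exact: (threshold_lt (f := fun k => (6 * k)%N) thr half_gt0 half_le
    (@bound_exponent_cvgy R)).
suff -> : k%:R ^+ 2 * expR (bound_exponent R k + ln 6) =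
          (6 * k)%:R * (k%:R * expR (bound_exponent R k)) by apply: ltW.
by rewrite expRD lnK ?posrE // natrM; ring.
Unshelve. all: by end_near.
Qed.
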